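(* Let $K\ge 1$, let $a_1,\dots,a_K\ge 0$ with $\sum_{k=1}^K a_k=1$, and let $0<\lambda<\frac{1}{K}$. For each fixed $\delta>0$ let $z^{\delta}\in\mathbb{R}^K_+$ be a solution (global minimizer) of $$\min_{z\in\mathbb{R}^K}\; -\sum_{k=1}^K a_k\log(z_k)+\lambda\sum_{k=1}^K\log(\delta+z_k)\quad\text{subject to } z\ge 0,\ \sum_{k=1}^K z_k=1.$$ Then $\lim_{\delta\to 0} z^{\delta}=z^0$, where $$z^0_k:=\frac{(a_k-\lambda)_+}{\sum_{j=1}^K (a_j-\lambda)_+}\quad\text{for each }k\in\{1,\dots,K\}.$$
   Context: $(t)_+=\max(t,0)$. The inequality $z\ge 0$ is entrywise. *)

From HB Require Import structures.
From mathcomp Require Import all_boot all_order all_algebra.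
From mathcomp Require Import all_classical all_reals all_analysis.
Set Implicit Arguments. Unset Strict Implicit. Unset Printing Implicit Defensive.
Import Order.TTheory GRing.Theory Num.Theory.
Import numFieldNormedType.Exports.
Local Open Scope ring_scope.

Definition pospart (R : realType) (t : R) : R := Num.max t 0.

(* the term -a log x, with values in the extended reals:
   -a log 0 = +oo when a > 0, and the convention 0 * log 0 = 0 *)
Definition neg_a_log (R : realType) (a x : R) : \bar R :=
  if x == 0 then (if a == 0 then 0%E else +oo%E) else ((- (a * ln x))%:E).

Definition objective (R : realType) (K : nat) (a : 'I_K -> R) (lam delta : R)
    (z : 'I_K -> R) : \bar R :=
  (\sum_(k < K) (neg_a_log (a k) (z k) + (lam * ln (delta + z k))%:E))%E.

Definition feasible (R : realType) (K : nat) (z : 'I_K -> R) : Prop :=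
  (forall k, 0 <= z k) /\ \sum_(k < K) z k = 1.

Definition is_minimizer (R : realType) (K : nat) (a : 'I_K -> R) (lam delta : R)
    (z : 'I_K -> R) : Prop :=
  feasible z /\
  forall y : 'I_K -> R, feasible y ->
    (objective a lam delta z <= objective a lam delta y)%E.

Definition z0 (R : realType) (K : nat) (a : 'I_K -> R) (lam : R) (k : 'I_K) : R :=
  pospart (a k - lam) / \sum_(j < K) pospart (a j - lam).

From HB Require Import structures.
From mathcomp Require Import all_boot all_order all_algebra.
From mathcomp Require Import all_classical all_reals all_analysis.
From mathcomp Require Import ring lra.
Import Order.TTheory GRing.Theory Num.Theory.
Import numFieldNormedType.Exports.
Local Open Scope ring_scope.
Local Open Scope classical_set_scope.

(* At a minimizer z of the delta-problem every coordinate with a_k > 0 is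
   positive, and moving mass between two positive coordinates shows that the
   marginal a_k / z_k - lam / (delta + z_k) takes one common value on all of
   them.  Weighting by z_k and summing identifies it as
   nu = 1 - lam * sum_j z_j / (delta + z_j), which lies in (0, 1], so that
   (a_k - lam) z_k + a_k delta = nu z_k (delta + z_k) for every k.  As
   delta -> 0 this balance forces nu z_k -> (a_k - lam)_+; summing over k gives
   nu -> sum_j (a_j - lam)_+ > 0, and dividing yields z_k -> z0_k. *)

Definition objective_term {R : realType} (a lam d x : R) : R :=
  - (a * ln x) + lam * ln (d + x).

Section objective.
Context {R : realType}.
Implicit Types (a lam d x : R).

Lemma objective_term_le a lam d x :
  ((objective_term a lam d x)%:E <= neg_a_log a x + (lam * ln (d + x))%:E)%E.
Proof.
rewrite /neg_a_log /objective_term; case: eqP => [x0|_]; last by rewrite EFinD.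
case: eqP => [->|_]; first by rewrite add0e mul0r oppr0 add0r.
by rewrite addye // leey.
Qed.

Lemma objective_termE a lam d x : 0 < x \/ a = 0 ->
  (neg_a_log a x + (lam * ln (d + x))%:E)%E = (objective_term a lam d x)%:E.
Proof.
move=> [x_gt0|->]; first by rewrite /neg_a_log gt_eqF // EFinD.
by rewrite /neg_a_log /objective_term eqxx mul0r oppr0 add0r; case: ifP; rewrite add0e.
Qed.

Lemma is_derive_addl (c x : R) : is_derive x 1 (fun y => c + y) 1.
Proof.
exact: is_derive_eq (is_deriveD (is_derive_cst c x 1) (is_derive_id x 1)) (add0r 1).
Qed.

Lemma is_derive_objective_term a lam {d x} : 0 < x -> 0 < d + x ->
  is_derive x 1 (objective_term a lam d) (lam / (d + x) - a / x).
Proof.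
move=> x_gt0 dx_gt0.
have := is_deriveD (is_deriveN (is_deriveZ a (is_derive1_ln x_gt0)))
  (is_deriveZ lam (is_derive1_comp (is_derive1_ln dx_gt0) (is_derive_addl d x))).
by move/is_derive_eq; apply; rewrite /GRing.scale /= mulr1 addrC.
Qed.

Context {K : nat}.

Lemma objectiveE {a y : 'I_K -> R} {lam d} : (forall i, 0 < y i \/ a i = 0) ->
  objective a lam d y = (\sum_(i < K) objective_term (a i) lam d (y i))%:E.
Proof.
move=> y_gt0; rewrite /objective -sumEFin.
by apply: eq_bigr => i _; exact: objective_termE.
Qed.

Lemma objective_pinfty {a y : 'I_K -> R} {lam d i} : y i = 0 -> a i != 0 ->
  objective a lam d y = +oo%E.
Proof.
move=> yi0 ai0; rewrite /objective (bigD1 i) //= {1}/neg_a_log yi0 eqxx (negbTE ai0).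
have rest_ge : ((\sum_(j < K | j != i) objective_term (a j) lam d (y j))%:E <=
    \sum_(j < K | j != i) (neg_a_log (a j) (y j) + (lam * ln (d + y j))%:E))%E.
  by rewrite -sumEFin; apply: lee_sum => j _; exact: objective_term_le.
set rest := (\sum_(j < K | j != i) _)%E in rest_ge *.
have rest_neq : rest != -oo%E by apply: contraTneq rest_ge => ->; rewrite leeNy_eq.
by rewrite addye // addye.
Qed.

End objective.

Definition shift_mass {R : realType} {K : nat} (y : 'I_K -> R) (j k : 'I_K) (s : R) :
    'I_K -> R :=
  fun i => if i == j then y j + s else if i == k then y k - s else y i.

Section shift_mass.
Context {R : realType} {K : nat}.
Implicit Types (y : 'I_K -> R) (j k : 'I_K) (s : R).

Lemma big_shift_mass (h : 'I_K -> R -> R) y j k s : j != k ->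
  \sum_(i < K) h i (shift_mass y j k s i) =
  h j (y j + s) + h k (y k - s) + \sum_(i < K | (i != j) && (i != k)) h i (y i).
Proof.
move=> jk; rewrite (bigD1 j) // (bigD1 k) 1?eq_sym //= addrA /shift_mass eqxx.
rewrite eq_sym (negbTE jk) eqxx; congr (_ + _).
by apply: eq_bigr => i /andP[/negbTE -> /negbTE ->].
Qed.

Lemma feasible_shift_mass {y j k s} : j != k -> feasible y -> - y j <= s <= y k ->
  feasible (shift_mass y j k s).
Proof.
move=> jk [y_ge0 y_sum] /andP[sj sk]; split.
  move=> i; rewrite /shift_mass; case: ifP => _; first by have := y_ge0 j; lra.
  by case: ifP => _ //; have := y_ge0 k; lra.
rewrite (big_shift_mass (fun _ x => x)) // -y_sum [in RHS](bigD1 j) //.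
by rewrite [in RHS](bigD1 k) 1?eq_sym //= addrA; congr (_ + _); lra.
Qed.

End shift_mass.

Lemma feasible_uniform {R : realType} {K : nat} (i : 'I_K) :
  feasible (fun _ : 'I_K => (K%:R : R)^-1).
Proof.
have K_gt0 : (0 < K)%N by apply: leq_ltn_trans (ltn_ord i).
split=> [_|]; first by rewrite invr_ge0 ler0n.
by rewrite sumr_const card_ord -[_ *+ K]mulr_natr mulVf // pnatr_eq0 -lt0n.
Qed.

Definition kkt_multiplier {R : realType} {K : nat} (lam d : R) (z : 'I_K -> R) : R :=
  1 - lam * \sum_(i < K) z i / (d + z i).

Section kkt_multiplier.
Context {R : realType} {K : nat} {lam d : R} {z : 'I_K -> R}.
Hypotheses (lam_ge0 : 0 <= lam) (d_ge0 : 0 <= d) (z_ge0 : forall i, 0 <= z i).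

Let ratio_ge0 i : 0 <= z i / (d + z i).
Proof. by rewrite divr_ge0 // addr_ge0. Qed.

Let ratio_le1 i : z i / (d + z i) <= 1.
Proof.
have [dz0|dz_neq0] := eqVneq (d + z i) 0; first by rewrite dz0 invr0 mulr0.
by rewrite ler_pdivrMr ?lt_def ?dz_neq0 ?addr_ge0 // mul1r lerDr.
Qed.

Lemma kkt_multiplier_le1 : kkt_multiplier lam d z <= 1.
Proof. by rewrite lerBlDr lerDl mulr_ge0 // sumr_ge0. Qed.

Lemma kkt_multiplier_gt0 : lam * K%:R < 1 -> 0 < kkt_multiplier lam d z.
Proof.
move=> lamK; rewrite subr_gt0 (le_lt_trans _ lamK) // ler_wpM2l //.
by rewrite -[X in X%:R]card_ord -sumr_const ler_sum.
Qed.

End kkt_multiplier.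

Section minimizer.
Context {R : realType} {K : nat} {a : 'I_K -> R} {lam d : R} {z : 'I_K -> R}.
Hypotheses (zmin : is_minimizer a lam d z) (d_ge0 : 0 <= d).

Lemma minimizer_gt0 i : a i != 0 -> 0 < z i.
Proof.
move=> ai0; have [[z_ge0 _] z_le] := zmin.
rewrite lt_def z_ge0 andbT; apply/eqP => zi0.
have := z_le _ (feasible_uniform i).
rewrite (objective_pinfty zi0 ai0) objectiveE ?leye_eq // => j.
by left; rewrite invr_gt0 ltr0n (leq_ltn_trans _ (ltn_ord i)).
Qed.

Lemma minimizer_gt0_or_eq0 i : 0 < z i \/ a i = 0.
Proof. by have [->|/minimizer_gt0] := eqVneq (a i) 0; [right | left]. Qed.

Lemma minimizer_stationary {j k} : j != k -> 0 < z j -> 0 < z k ->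
  a j / z j - lam / (d + z j) = a k / z k - lam / (d + z k).
Proof.
move=> jk zj zk; have [z_feas z_le] := zmin.
pose phi s := objective_term (a j) lam d (z j + s) + objective_term (a k) lam d (z k - s).
have phi_min s : s \in `](- z j), (z k)[%R -> phi 0 <= phi s.
  rewrite in_itv /= => /andP[sj sk].
  have y_gt0 i : 0 < shift_mass z j k s i \/ a i = 0.
    rewrite /shift_mass; case: ifP => _; first by left; lra.
    by case: ifP => _; [left; lra | exact: minimizer_gt0_or_eq0].
  have s_in : - z j <= s <= z k by rewrite !ltW.
  have := z_le _ (feasible_shift_mass jk z_feas s_in).
  rewrite (objectiveE minimizer_gt0_or_eq0) (objectiveE y_gt0) lee_fin.
  rewrite (big_shift_mass (fun i => objective_term (a i) lam d)) //.
  by rewrite (bigD1 j) // (bigD1 k) 1?eq_sym //= addrA lerD2r /phi addr0 subr0.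
have phi_derive s : s \in `](- z j), (z k)[%R -> is_derive s 1 phi
    ((lam / (d + (z j + s)) - a j / (z j + s)) * 1 +
     (lam / (d + (z k - s)) - a k / (z k - s)) * (0 - 1)).
  rewrite in_itv /= => /andP[sj sk].
  have dk : is_derive s 1 (fun t => z k - t) (0 - 1).
    exact: is_deriveB (is_derive_cst _ s 1) (is_derive_id s 1).
  have zjs : 0 < z j + s by lra.
  have zks : 0 < z k - s by lra.
  have oj := is_derive_objective_term (a j) lam zjs (ltr_wpDl d_ge0 zjs).
  have ok := is_derive_objective_term (a k) lam zks (ltr_wpDl d_ge0 zks).
  exact (is_deriveD (is_derive1_comp oj (is_derive_addl _ _))
    (@is_derive1_comp _ _ (fun t => z k - t) _ _ _ ok dk)).
have s0_in : (0 : R) \in `](- z j), (z k)[%R by rewrite in_itv /= oppr_lt0 zj zk.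
have le_zj_zk : - z j <= z k by rewrite (le_trans _ (ltW zk)) // oppr_le0 ltW.
have phi'0 := derive1_at_min le_zj_zk
  (fun s hs => @ex_derive _ _ _ _ _ _ _ (phi_derive s hs)) s0_in phi_min.
have := @derive_val _ _ _ _ _ _ _ (phi_derive 0 s0_in).
rewrite (@derive_val _ _ _ _ _ _ _ phi'0) !addr0 !subr0 mulr1 sub0r mulrN1; lra.
Qed.

Hypothesis (a_sum : \sum_(i < K) a i = 1).

Lemma minimizer_marginal {k} : 0 < z k ->
  a k / z k - lam / (d + z k) = kkt_multiplier lam d z.
Proof.
(* Both sides equal sum_i z_i (a_i / z_i - lam / (d + z_i)). *)
move=> zk; have [[z_ge0 z_sum] _] := zmin.
pose c := a k / z k - lam / (d + z k).
have termE i : z i * (a i / z i - lam / (d + z i)) = a i - lam * (z i / (d + z i)).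
  have [zi0|zi_neq0] := eqVneq (z i) 0.
    have ai0 : a i = 0 by case: (minimizer_gt0_or_eq0 i); rewrite ?zi0 ?ltxx.
    by rewrite zi0 ai0 !mul0r mulr0 subr0.
  by rewrite mulrBr mulrCA divff // mulr1 mulrCA.
have termc i : z i * (a i / z i - lam / (d + z i)) = z i * c.
  have [zi0|zi_neq0] := eqVneq (z i) 0; first by rewrite zi0 !mul0r.
  have [->//|ik] := eqVneq i k.
  by rewrite (minimizer_stationary ik) // lt_def zi_neq0 z_ge0.
rewrite -/c -[c]mul1r -z_sum mulr_suml /kkt_multiplier -a_sum mulr_sumr -sumrB.
by apply: eq_bigr => i _; rewrite -termE termc.
Qed.

Lemma minimizer_balance k :
  (a k - lam) * z k + a k * d = kkt_multiplier lam d z * z k * (d + z k).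
Proof.
have [zk0|zk] := eqVneq (z k) 0.
  have ak0 : a k = 0 by case: (minimizer_gt0_or_eq0 k); rewrite ?zk0 ?ltxx.
  by rewrite zk0 ak0 !(mulr0, mul0r, addr0).
have [[z_ge0 _] _] := zmin.
have zk_gt0 : 0 < z k by rewrite lt_def zk z_ge0.
have dzk : d + z k != 0 by rewrite gt_eqF // ltr_wpDl.
rewrite -(minimizer_marginal zk_gt0) !mulrBl divfK // mulrAC divfK //; ring.
Qed.

End minimizer.

Section scaled_coordinate.
Context {R : realType}.
Implicit Types a lam nu x t : R.

Lemma scaled_coordinate_sqr_le {a lam nu x t} :
  0 <= a <= 1 -> a <= lam -> 0 <= nu <= 1 -> 0 <= x -> 0 <= t ->
  (a - lam) * x + a * t = nu * x * (t + x) -> (nu * x) ^+ 2 <= t.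
Proof.
move=> /andP[a0 a1] al /andP[nu0 nu1] x0 t0 balance.
have nux0 : 0 <= nu * x by exact: mulr_ge0.
have : (a - lam) * x <= 0 by apply: mulr_le0_ge0; lra.
have : a * t <= t by rewrite ler_piMl.
have : nu * x * x <= nu * x * (t + x) by rewrite ler_wpM2l // lerDr.
have : nu * x * (nu * x) <= nu * x * x by rewrite ler_wpM2l // ler_piMl.
rewrite expr2; lra.
Qed.

Lemma scaled_coordinate_dist_le {a lam nu x t} :
  a <= 1 -> 0 <= lam < a -> 0 <= nu <= 1 -> 0 <= x -> 0 < t ->
  t <= (a - lam) / 2 ->
  (a - lam) * x + a * t = nu * x * (t + x) ->
  `|nu * x - (a - lam)| <= 2 * t / (a - lam).
Proof.
move=> a1 /andP[l0 la] /andP[nu0 nu1] x0 t0 tD balance.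
set D := a - lam in tD balance *; have D0 : 0 < D by rewrite subr_gt0.
(* E x = a t - nu t x traps E between -t and t / x <= 2 t / D. *)
set E := nu * x - D.
have Ex : E * x = a * t - nu * t * x by rewrite /E mulrBl; lra.
have x_gt0 : 0 < x.
  rewrite lt_neqAle x0 andbT; apply/eqP => x_eq0; move: balance.
  rewrite -x_eq0 !(mulr0, mul0r, add0r) => /eqP; rewrite mulf_eq0; lra.
have E_ge : - t <= E.
  rewrite -(ler_pM2r x_gt0) Ex mulNr.
  have : nu * t * x <= t * x by rewrite -mulrA ler_piMl // mulr_ge0 // ltW.
  have : 0 <= a * t by rewrite mulr_ge0 ?ltW //; lra.
  lra.
have x_ge : D / 2 <= x.
  have : nu * x <= x by rewrite ler_piMl.
  rewrite /E in E_ge; lra.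
have E_le : E * (D / 2) <= t.
  have [E0|E0] := lerP E 0; first by nra.
  apply: le_trans (_ : E * x <= t); first by rewrite ler_pM2l.
  have : 0 <= nu * t * x by rewrite !mulr_ge0 // ltW.
  have : a * t <= t by rewrite ler_piMl // ?ltW //; lra.
  lra.
have tD2 : t <= 2 * t / D.
  have D1 : D <= 1 by rewrite /D; lra.
  rewrite ler_pdivlMr //; nra.
rewrite ler_norml -/E; apply/andP; split; first lra.
rewrite ler_pdivlMr //; lra.
Qed.

Lemma scaled_coordinate_cvg a lam (nu x : R -> R) :
  0 <= a <= 1 -> 0 <= lam ->
  (\forall t \near 0^'+, [/\ 0 <= nu t <= 1, 0 <= x t &
     (a - lam) * x t + a * t = nu t * x t * (t + x t)]) ->
  (fun t => nu t * x t) @ 0^'+ --> pospart (a - lam).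
Proof.
move=> a01 l0 near_id; apply/cvgrPdist_le => e e0.
have [al|la] := lerP a lam.
  rewrite /pospart max_r ?subr_le0 //; near=> t.
  have /(_ _)[//|nu01 x0 balance] := near near_id t.
  have nux0 : 0 <= nu t * x t by case/andP: nu01 => nu0 _; exact: mulr_ge0.
  rewrite sub0r normrN ger0_norm // -(ler_pXn2r (_ : 0 < 2)%N) //.
    have t0 : 0 <= t by apply/ltW; near: t; exact: nbhs_right_gt.
    apply: le_trans (scaled_coordinate_sqr_le a01 al nu01 x0 t0 balance) _.
    by near: t; apply: nbhs_right_le; exact: exprn_gt0.
  by rewrite nnegrE ltW.
have D0 : 0 < a - lam by rewrite subr_gt0.
rewrite /pospart max_l ?subr_ge0 ?ltW //; near=> t.
have /(_ _)[//|nu01 x0 balance] := near near_id t.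
rewrite distrC; apply: le_trans (scaled_coordinate_dist_le _ _ nu01 x0 _ _ balance) _.
- by case/andP: a01.
- by rewrite l0 la.
- by near: t; exact: nbhs_right_gt.
- by near: t; apply: nbhs_right_le; exact: divr_gt0.
- have : t <= e * (a - lam) / 2.
    by near: t; apply: nbhs_right_le; rewrite divr_gt0 // mulr_gt0.
  rewrite ler_pdivrMr //; lra.
Unshelve. all: by end_near.
Qed.

End scaled_coordinate.

Lemma cvg_normalize {T : Type} {F : set_system T} {FF : Filter F} {R : realType}
    {K : nat} (z : T -> 'I_K -> R) (nu : T -> R) (p : 'I_K -> R) :
  (forall k, (fun t => nu t * z t k) @ F --> p k) ->
  (\forall t \near F, \sum_(k < K) z t k = 1) ->
  \sum_(k < K) p k != 0 ->
  forall k, (fun t => z t k) @ F --> p k / \sum_(k < K) p k.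
Proof.
move=> nuz_cvg z_sum p_sum k.
have nu_cvg : nu @ F --> \sum_(k < K) p k.
  have := @cvg_big _ _ +%R 0 xpredT add_continuous _ F (index_enum _) _ _ FF
    (fun k _ => nuz_cvg k).
  apply: cvg_trans; apply: near_eq_cvg.
  by near=> t; rewrite -mulr_sumr (near z_sum t) ?mulr1.
have nu_neq0 : \forall t \near F, nu t != 0 by exact: cvgr_neq0 nu_cvg p_sum.
apply: cvg_trans (cvgM (nuz_cvg k) (cvgV p_sum nu_cvg)); apply: near_eq_cvg.
near=> t; rewrite /= mulrAC divff ?mul1r //; near: t.
Unshelve. all: by end_near.
Qed.

Lemma sum_pospart_sub_gt0 {R : realType} {K : nat} (a : 'I_K -> R) (lam : R) :
  \sum_(k < K) a k = 1 -> lam * K%:R < 1 -> 0 < \sum_(k < K) pospart (a k - lam).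
Proof.
move=> a_sum lamK; apply: lt_le_trans (_ : 0 < \sum_(k < K) (a k - lam)) _.
  by rewrite sumrB a_sum sumr_const card_ord -mulr_natr subr_gt0.
by apply: ler_sum => k _; rewrite /pospart le_max lexx.
Qed.

Theorem theorem1 (R : realType) (K : nat) (a : 'I_K -> R) (lam : R)
  (z : R -> 'I_K -> R) :
  (0 < K)%N ->
  (forall k, 0 <= a k) ->
  \sum_(k < K) a k = 1 ->
  0 < lam -> lam < 1 / K%:R ->
  (forall delta : R, 0 < delta -> is_minimizer a lam delta (z delta)) ->
  forall k : 'I_K, (fun delta => z delta k) @ 0^'+ --> z0 a lam k.
Proof.
move=> K_gt0 a_ge0 a_sum lam_gt0 lam_lt zmin.
have lamK : lam * K%:R < 1 by rewrite -ltr_pdivlMr ?ltr0n.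
have a_le1 i : a i <= 1 by rewrite -a_sum (bigD1 i) //= lerDl sumr_ge0.
pose nu t := kkt_multiplier lam t (z t).
apply: (cvg_normalize _ nu).
- move=> i; apply: scaled_coordinate_cvg; [by rewrite a_ge0 a_le1 | exact: ltW |].
  near=> t; have t_gt0 : 0 < t by near: t; exact: nbhs_right_gt.
  have [[z_ge0 _] _] := zmin t t_gt0.
  have nu_gt0 := kkt_multiplier_gt0 (ltW lam_gt0) (ltW t_gt0) z_ge0 lamK.
  have nu_le1 := kkt_multiplier_le1 (ltW lam_gt0) (ltW t_gt0) z_ge0.
  split; [by rewrite ltW | exact: z_ge0 |].
  exact: minimizer_balance (zmin t t_gt0) _ a_sum _.
- near=> t; have t_gt0 : 0 < t by near: t; exact: nbhs_right_gt.
  by have [[_ z_sum] _] := zmin t t_gt0.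
- by rewrite gt_eqF // sum_pospart_sub_gt0.
Unshelve. all: by end_near.
Qed.
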